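(* Let $L$ be a finite inf-semilattice with least element $\bot$ and let $\widetilde L:=\{(x,y)\in L^2: x\wedge y=\bot\}$ with the product order. Then for all $(z,t),(x,y)\in\widetilde L$ with $(z,t)\le(x,y)$, $$\mu_{\widetilde L}((z,t),(x,y))=\mu_L(z,x)\,\mu_L(t,y).$$ Consequently, if $f,g:\widetilde L\to\mathbb R$ satisfy $f(x,y)=\sum_{(x',y')\in\widetilde L,\,(x',y')\le(x,y)}g(x',y')$ for all $(x,y)\in\widetilde L$, then $g(x,y)=\sum_{(z,t)\in\widetilde L,\,(z,t)\le(x,y)}\mu_L(z,x)\mu_L(t,y)f(z,t)$ for all $(x,y)\in\widetilde L$.
   Context: For a finite poset $P$, the Möbius function $\mu_P$ is defined on pairs $a\le b$ by $\mu_P(a,a)=1$ and $\sum_{a\le c\le b}\mu_P(a,c)=0$ for $a<b$; it is characterized by: for real functions $f,g$ on $P$ (with $P$ having a least element), $g(x)=\sum_{y\le x}f(y)$ for all $x$ iff $f(x)=\sum_{y\le x}\mu_P(y,x)g(y)$ for all $x$. *)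

From HB Require Import structures.
From mathcomp Require Import all_boot all_order all_algebra.
Set Implicit Arguments. Unset Strict Implicit. Unset Printing Implicit Defensive.
Import Order.TTheory GRing.Theory Num.Theory.

(* The recursion is run with fuel
   #|T|, which suffices since every chain in T has fewer than #|T| steps. *)
Fixpoint mobius_fuel (T : finType) (le : rel T) (n : nat) (a b : T) : int :=
  if a == b then 1%R else
  match n with
  | 0 => 0%R
  | n'.+1 =>
      if le a b then
        (- \sum_(c : T | le a c && le c b && (c != b)) mobius_fuel le n' a c)%R
      else 0%R
  end.

Definition mobius (T : finType) (le : rel T) (a b : T) : int :=
  mobius_fuel le #|T| a b.

Definition leL d (L : porderType d) : rel L := fun x y => (x <= y)%O.

Definition Ltilde d (L : finBMeetSemilatticeType d) :=
  {p : L * L | (p.1 `&` p.2 == \bot)%O}.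

Definition leLt d (L : finBMeetSemilatticeType d) : rel (Ltilde L) :=
  fun p q => ((val p).1 <= (val q).1)%O && ((val p).2 <= (val q).2)%O.

From HB Require Import structures.
From mathcomp Require Import all_boot all_order all_algebra.
Import Order.TTheory GRing.Theory Num.Theory.
Local Open Scope ring_scope.

(* We show that the fuel-based definition satisfies the
   defining recursion, hence the "left" identity
     sum_{a <= c <= b} mu(a,c) = [a = b],
   and that mu is the unique function on comparable pairs with this property.
   Viewing mu and the zeta function as #|T| x #|T| integer matrices, the left
   identity says mu * zeta = 1, so also zeta * mu = 1 (a one-sided inverse of
   a square matrix over a commutative ring is two-sided); this "right"
   identity yields Möbius inversion f = zeta g  ==>  g = mu f.  Since this set
   is closed downwards in L x L, every interval [p, q] of Ltilde is the
   product of the intervals [p1, q1] and [p2, q2] of L; hence the function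
   mu_L(p1,q1) * mu_L(p2,q2) satisfies the left identity on Ltilde and, by
   uniqueness, is mu_Ltilde.  Möbius inversion in Ltilde then gives the
   second part of the theorem. *)

Section FinitePosetMobius.
Set Implicit Arguments. Unset Strict Implicit.
Variables (T : finType) (le : rel T).
Hypothesis le_refl : forall a, le a a.
Hypothesis le_anti : forall a b, le a b -> le b a -> a = b.
Hypothesis le_trans : forall a b c, le a b -> le b c -> le a c.

(* The closed interval [a, b]; its size is the measure of the recursions. *)
Definition itv a b := [pred c | le a c && le c b].

Lemma card_itv_lt a b c : le a c -> le c b -> c != b ->
  (#|itv a c| < #|itv a b|)%N.
Proof.
move=> le_ac le_cb ne_cb; apply/proper_card/properP; split.
  apply/subsetP => x; rewrite !inE => /andP[-> le_xc] /=.
  exact: le_trans le_xc le_cb.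
exists b; first by rewrite inE le_refl (le_trans le_ac le_cb).
rewrite inE negb_and; apply/orP; right; apply: contra ne_cb => le_bc.
by rewrite (le_anti le_cb le_bc).
Qed.

Lemma mobius_fuel_nle n a b : ~~ le a b -> mobius_fuel le n a b = 0.
Proof.
move=> nle_ab; have ne_ab : a != b by apply: contraNneq nle_ab => ->.
by case: n => [|n] /=; rewrite (negbTE ne_ab) // (negbTE nle_ab).
Qed.

Lemma mobius_fuel_stable n a b : (#|itv a b| <= n.+1)%N ->
  forall m, (n <= m)%N -> mobius_fuel le m a b = mobius_fuel le n a b.
Proof.
elim: n a b => [|n IH] a b small m le_nm.
  have [<-|ne_ab] := eqVneq a b; first by case: m {le_nm} => [|m] /=; rewrite eqxx.
  have [le_ab|nle_ab] := boolP (le a b); last by rewrite !mobius_fuel_nle.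
  have : (2 <= #|itv a b|)%N.
    by rewrite (cardD1 a) (cardD1 b) !inE eq_sym ne_ab !le_refl le_ab.
  by rewrite leqNgt ltnS small.
case: m le_nm => [//|m] le_nm /=; case: eqP => // _; case: ifP => // _.
congr (- _); apply: eq_bigr => c /andP[/andP[le_ac le_cb] ne_cb].
apply: IH => //; rewrite -ltnS; apply: leq_trans small.
exact: card_itv_lt.
Qed.

Lemma mobiusE a b : mobius le a b =
  if a == b then 1 else if le a b then
    - \sum_(c | le a c && le c b && (c != b)) mobius le a c else 0.
Proof.
rewrite /mobius; have [<-|ne_ab] := eqVneq a b.
  by case: #|T| => [|n] /=; rewrite eqxx.
have [le_ab|nle_ab] := boolP (le a b); last by rewrite mobius_fuel_nle.
have : (0 < #|T|)%N by apply/card_gt0P; exists a.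
case card_T: #|T| => [//|n] _ /=; rewrite (negbTE ne_ab) le_ab; congr (- _).
apply: eq_bigr => c /andP[/andP[le_ac le_cb] ne_cb].
change (mobius_fuel le n a c = mobius_fuel le n.+1 a c).
symmetry; apply: mobius_fuel_stable => //.
apply: ltnW; rewrite -card_T.
exact: leq_trans (card_itv_lt le_ac le_cb ne_cb) (max_card _).
Qed.

Lemma mobius_nle a b : ~~ le a b -> mobius le a b = 0.
Proof.
move=> nle_ab; rewrite mobiusE (negbTE nle_ab).
by case: eqP => // eq_ab; rewrite eq_ab le_refl in nle_ab.
Qed.

Lemma mobius_sum_left a b : \sum_(c | le c b) mobius le a c = (a == b)%:R.
Proof.
have [le_ab|nle_ab] := boolP (le a b); last first.
  rewrite big1 => [|c le_cb].
    by case: eqP => // eq_ab; rewrite eq_ab le_refl in nle_ab.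
  by apply: mobius_nle; apply: contra nle_ab => le_ac; apply: le_trans le_cb.
rewrite (bigD1 b) ?le_refl //= mobiusE; case: eqP => [<-|/eqP ne_ab].
  rewrite big1 ?addr0 // => c /andP[le_ca ne_ca]; apply: mobius_nle.
  by apply: contra ne_ca => le_ac; rewrite (le_anti le_ca le_ac).
rewrite le_ab [X in _ + X](bigID (le a)) /= [X in _ + (_ + X)]big1 ?addr0.
  rewrite addrC; apply/eqP; rewrite subr_eq0; apply/eqP.
  by apply: eq_bigl => c; rewrite andbC andbA.
by move=> c /andP[_ /mobius_nle].
Qed.

Lemma mobius_sum_itv a b :
  \sum_(c | le a c && le c b) mobius le a c = (a == b)%:R.
Proof.
rewrite -mobius_sum_left [RHS](bigID (le a)) /= [X in _ + X]big1 ?addr0.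
  by apply: eq_bigl => c; rewrite andbC.
by move=> c /andP[_ /mobius_nle].
Qed.

Lemma mobius_unique (m : T -> T -> int) :
  (forall a b, le a b -> \sum_(c | le a c && le c b) m a c = (a == b)%:R) ->
  forall a b, le a b -> m a b = mobius le a b.
Proof.
move=> m_sum a b; move: {2}#|itv a b| (leqnn #|itv a b|) => n.
elim: n b => [|n IH] b small le_ab.
  suff : (0 < #|itv a b|)%N by rewrite lt0n -leqn0 small.
  by apply/card_gt0P; exists a; rewrite inE le_refl le_ab.
have b_in : le a b && le b b by rewrite le_ab le_refl.
have sum_below_b : \sum_(c | le a c && le c b && (c != b)) m a c =
                   \sum_(c | le a c && le c b && (c != b)) mobius le a c.
  apply: eq_bigr => c /andP[/andP[le_ac le_cb] ne_cb]; apply: IH => //.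
  by rewrite -ltnS; apply: leq_trans small; apply: card_itv_lt.
have := mobius_sum_itv a b; rewrite (bigD1 b b_in) /= -sum_below_b.
by move: (m_sum a b le_ab); rewrite (bigD1 b b_in) /= => <- /addIr->.
Qed.

Lemma sum_enum_val (F : T -> int) :
  \sum_(x : T) F x = \sum_(i < #|T|) F (enum_val i).
Proof. by rewrite -big_enum_val; apply: eq_bigl => x; rewrite inE. Qed.

(* Right identity: the matrix of mu is a left, hence right, inverse of the
   zeta matrix. *)
Lemma mobius_sum_right a b : \sum_(c | le a c) mobius le c b = (a == b)%:R.
Proof.
pose Mu : 'M[int]_#|T| := \matrix_(i, j) mobius le (enum_val i) (enum_val j).
pose Zeta : 'M[int]_#|T| := \matrix_(i, j) (le (enum_val i) (enum_val j))%:R.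
have MuZeta : Mu *m Zeta = 1%:M.
  apply/matrixP => i j; rewrite !mxE -(inj_eq enum_val_inj) -mobius_sum_left.
  rewrite [RHS]big_mkcond [RHS]sum_enum_val; apply: eq_bigr => k _; rewrite !mxE.
  by case: (le _ _); rewrite ?mulr1 ?mulr0.
have /matrixP /(_ (enum_rank a) (enum_rank b)) := mulmx1C MuZeta.
rewrite !mxE (inj_eq enum_rank_inj) => <-.
rewrite [LHS]big_mkcond [LHS]sum_enum_val; apply: eq_bigr => k _.
rewrite !mxE !enum_rankK.
by case: (le _ _); rewrite ?mul1r ?mul0r.
Qed.

Lemma mobius_inversion (R : pzRingType) (f g : T -> R) :
  (forall b, f b = \sum_(a | le a b) g a) ->
  forall b, g b = \sum_(a | le a b) (mobius le a b)%:~R * f a.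
Proof.
move=> f_sum b; under eq_bigr do rewrite f_sum big_distrr.
rewrite (exchange_big_dep (fun c => le c b)) /=; last first.
  by move=> a c le_ab le_ca; apply: le_trans le_ca le_ab.
have right_itv c : \sum_(a | le a b && le c a) mobius le a b = (c == b)%:R.
  rewrite -mobius_sum_right [RHS](bigID (le^~ b)) /= [X in _ + X]big1 ?addr0.
    by apply: eq_bigl => a; rewrite andbC.
  by move=> a /andP[_ /mobius_nle].
under eq_bigr do rewrite -big_distrl /= -rmorph_sum right_itv.
rewrite (bigD1 b) ?le_refl //= eqxx mul1r big1 ?addr0 // => c /andP[_ /negbTE->].
by rewrite mul0r.
Qed.
End FinitePosetMobius.

Section DisjointPairs.
Set Implicit Arguments. Unset Strict Implicit.
Variables (d : Order.disp_t) (L : finBMeetSemilatticeType d).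
Local Notation muL := (mobius (@leL d L)).

Lemma leL_refl (a : L) : leL a a. Proof. exact: lexx. Qed.
Lemma leL_anti (a b : L) : leL a b -> leL b a -> a = b.
Proof. by move=> le_ab le_ba; apply/le_anti/andP. Qed.
Lemma leL_trans (a b c : L) : leL a b -> leL b c -> leL a c.
Proof. exact: le_trans. Qed.

Lemma leLt_refl (p : Ltilde L) : leLt p p. Proof. by rewrite /leLt !lexx. Qed.
Lemma leLt_anti (p q : Ltilde L) : leLt p q -> leLt q p -> p = q.
Proof.
move=> /andP[le1 le2] /andP[ge1 ge2]; apply: val_inj.
move: le1 le2 ge1 ge2; case: (val p) (val q) => [p1 p2] [q1 q2] /= le1 le2 ge1 ge2.
by congr pair; apply: leL_anti.
Qed.
Lemma leLt_trans (p q r : Ltilde L) : leLt p q -> leLt q r -> leLt p r.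
Proof.
by move=> /andP[le1 le2] /andP[le1' le2']; rewrite /leLt (le_trans le1 le1') (le_trans le2 le2').
Qed.

Lemma disjoint_below (x : L * L) (q : Ltilde L) :
  (x.1 <= (val q).1)%O -> (x.2 <= (val q).2)%O -> (x.1 `&` x.2 == \bot)%O.
Proof. by move=> le1 le2; rewrite -lex0 -(eqP (valP q)) leI2. Qed.

Lemma sum_Ltilde_itv (p q : Ltilde L) (F : L -> L -> int) :
  \sum_(r | leLt p r && leLt r q) F (val r).1 (val r).2 =
  \sum_(x1 | leL (val p).1 x1 && leL x1 (val q).1)
    \sum_(x2 | leL (val p).2 x2 && leL x2 (val q).2) F x1 x2.
Proof.
rewrite pair_big_dep /=.
rewrite (reindex_omap (val : Ltilde L -> L * L) insub) /=; last first.
  move=> x /andP[/andP[_ le1] /andP[_ le2]].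
  by rewrite insubT //; apply: (@disjoint_below x q).
apply: eq_bigl => -[[x1 x2] disj] /=; rewrite insubT /= eqxx andbT.
by rewrite /leLt /leL /= -!andbA; congr andb; apply: andbCA.
Qed.

Lemma mobius_Ltilde (p q : Ltilde L) : leLt p q ->
  mobius (@leLt d L) p q = muL (val p).1 (val q).1 * muL (val p).2 (val q).2.
Proof.
pose mu2 (p q : Ltilde L) := muL (val p).1 (val q).1 * muL (val p).2 (val q).2.
move=> le_pq; symmetry.
apply: (mobius_unique leLt_refl leLt_anti leLt_trans (m := mu2)) => // {le_pq}p {}q _.
rewrite (sum_Ltilde_itv p q (fun x1 x2 => muL (val p).1 x1 * muL (val p).2 x2)).
rewrite -big_distrlr /= !(mobius_sum_itv leL_refl leL_anti leL_trans) -natrM.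
congr _%:R; rewrite -(inj_eq val_inj).
by rewrite mulnb -xpair_eqE -!surjective_pairing.
Qed.
End DisjointPairs.

Theorem mainTheorem2 (d : Order.disp_t) (L : finBMeetSemilatticeType d) (R : realFieldType) :
  (forall p q : Ltilde L, leLt p q ->
     mobius (@leLt d L) p q =
     mobius (@leL d L) (val p).1 (val q).1 * mobius (@leL d L) (val p).2 (val q).2)
  /\
  (forall f g : Ltilde L -> R,
     (forall p : Ltilde L, f p = \sum_(p' : Ltilde L | leLt p' p) g p') ->
     forall p : Ltilde L,
       g p = \sum_(q : Ltilde L | leLt q p)
               ((mobius (@leL d L) (val q).1 (val p).1)%:~R *
                (mobius (@leL d L) (val q).2 (val p).2)%:~R * f q)).
Proof.
split; first exact: mobius_Ltilde.
move=> f g f_sum p.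
rewrite (mobius_inversion (@leLt_refl d L) (@leLt_anti d L) (@leLt_trans d L) f_sum).
by apply: eq_bigr => q le_qp; rewrite mobius_Ltilde // intrM.
Qed.
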